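(* Let $n\ge 2$, let $\mathcal A$ be a maximal commutative subalgebra of $\mathcal M_d(\mathbb C)$, and let $A,B,A',B'\in\mathcal A$ satisfy $\ker A\cap\ker B=\{0\}$ and $\ker A'\cap\ker B'=\{0\}$. Then $\mathcal F_{A,B}^{\mathcal A}=\mathcal F_{A',B'}^{\mathcal A}$ if and only if $AB'=A'B$.
   Context: For $A,B\in\mathcal A$, $\mathcal F_{A,B}^{\mathcal A}$ is the set of $n\times n$ block Toeplitz matrices $(T_{p-q})_{p,q=0}^{n-1}$ with all $T_j\in\mathcal A$ ($-(n-1)\le j\le n-1$) and $AT_j=BT_{j-n}$ for $j=1,\dots,n-1$. *)

From HB Require Import structures.
From mathcomp Require Import all_boot all_order all_algebra.
Set Implicit Arguments. Unset Strict Implicit. Unset Printing Implicit Defensive.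
Import Order.TTheory GRing.Theory Num.Theory.
Local Open Scope ring_scope.

Section Defs.
Variables (C : numClosedFieldType) (d : nat).
Notation Md := 'M[C]_d.

Definition is_subalgebra (S : Md -> Prop) : Prop :=
  [/\ S 1%:M,
      (forall X Y, S X -> S Y -> S (X + Y)),
      (forall (c : C) X, S X -> S (c *: X)) &
      (forall X Y, S X -> S Y -> S (X *m Y))].

Definition is_commutative_set (S : Md -> Prop) : Prop :=
  forall X Y, S X -> S Y -> X *m Y = Y *m X.

Definition is_comm_subalgebra (S : Md -> Prop) : Prop :=
  is_subalgebra S /\ is_commutative_set S.

Definition is_maximal_comm_subalgebra (S : Md -> Prop) : Prop :=
  is_comm_subalgebra S /\
  forall T : Md -> Prop, is_comm_subalgebra T ->
    (forall X, S X -> T X) -> forall X, T X -> S X.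

Definition trivial_common_kernel (A B : Md) : Prop :=
  forall v : 'cV[C]_d, A *m v = 0 -> B *m v = 0 -> v = 0.

Definition block_toeplitz (n : nat) (T : int -> Md) : 'M[Md]_n :=
  \matrix_(p < n, q < n) T (p%:Z - q%:Z).

Definition F_set (n : nat) (S : Md -> Prop) (A B : Md) (M : 'M[Md]_n) : Prop :=
  exists T : int -> Md,
    [/\ M = block_toeplitz n T,
        (forall j : int, - (n%:Z - 1) <= j <= n%:Z - 1 -> S (T j)) &
        (forall j : int, 1 <= j <= n%:Z - 1 -> A *m T j = B *m T (j - n%:Z))].
End Defs.

(* If A B' = A' B, then A T_j = B T_{j-n} forces W := A' T_j - B' T_{j-n} to
   satisfy A W = A' (A T_j - B T_{j-n}) = 0 and likewise B W = 0, since
   A, B, A', B' commute; so W = 0 because ker A ∩ ker B = {0}; by symmetry the two sets coincide.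
   Conversely, T_j := B for j > 0 and T_j := A for j <= 0 defines an element
   of F_{A,B}; its blocks T_1 = B and T_{1-n} = A are determined by the matrix,
   so membership in F_{A',B'} gives A' B = B' A. *)
From HB Require Import structures.
From mathcomp Require Import all_boot all_order all_algebra.
From mathcomp Require Import zify.
Import Order.TTheory GRing.Theory Num.Theory.
Local Open Scope ring_scope.

Section CommonKernel.
Context {C : numClosedFieldType} {d : nat}.

Lemma trivial_common_kernel_mulmx {m} {A B : 'M[C]_d} {W : 'M[C]_(d, m)} :
  trivial_common_kernel A B -> A *m W = 0 -> B *m W = 0 -> W = 0.
Proof.
move=> hAB hAW hBW; apply/row_matrixP => i; apply/matrixP => k j.
have /(congr1 (fun v : 'cV[C]_d => v i 0)) : col j W = 0.
  by apply: hAB; rewrite colE mulmxA ?hAW ?hBW mul0mx.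
by rewrite !mxE.
Qed.

Context {S : 'M[C]_d -> Prop} {A B A' B' : 'M[C]_d}.
Hypothesis hS : is_commutative_set S.
Hypotheses (hA : S A) (hB : S B) (hA' : S A') (hB' : S B').
Hypotheses (hAB : trivial_common_kernel A B) (eAB : A *m B' = A' *m B).

Lemma commuting_relation_transfer (X Y : 'M[C]_d) :
  A *m X = B *m Y -> A' *m X = B' *m Y.
Proof.
move=> eXY; apply/eqP; rewrite -subr_eq0; apply/eqP.
apply: (trivial_common_kernel_mulmx hAB).
  rewrite mulmxBr !mulmxA (hS _ _ hA hA') eAB -[A' *m A *m X]mulmxA eXY.
  by rewrite mulmxA subrr.
rewrite mulmxBr !mulmxA (hS _ _ hB hA') -eAB (hS _ _ hA hB').
by rewrite -[B' *m A *m X]mulmxA eXY mulmxA (hS _ _ hB' hB) subrr.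
Qed.

Lemma F_set_sub {n} (M : 'M['M[C]_d]_n) : F_set S A B M -> F_set S A' B' M.
Proof.
case=> T [-> hT hTAB]; exists T; split=> // j hj.
exact: commuting_relation_transfer (hTAB _ hj).
Qed.

End CommonKernel.

Section BlockToeplitz.
Context {C : numClosedFieldType} {d n : nat}.

Lemma block_toeplitz_inj_on {T T' : int -> 'M[C]_d} :
  block_toeplitz n T = block_toeplitz n T' ->
  forall j : int, - (n%:Z - 1) <= j <= n%:Z - 1 -> T j = T' j.
Proof.
move=> eTT' j /andP[hj1 hjn].
have entry p q (hp : (p < n)%N) (hq : (q < n)%N) :
    T (p%:Z - q%:Z) = T' (p%:Z - q%:Z).
  have := congr1 (fun M : 'M_n => M (Ordinal hp) (Ordinal hq)) eTT'.
  by rewrite !mxE.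
case: (lerP 0 j) => hj0.
- have hp : (`|j|%N < n)%N by lia.
  have := entry _ _ hp (leq_ltn_trans (leq0n _) hp).
  by rewrite subr0 gez0_abs.
- have hq : (`|j|%N < n)%N by lia.
  have := entry _ _ (leq_ltn_trans (leq0n _) hq) hq.
  by rewrite sub0r ltz0_abs // opprK.
Qed.

End BlockToeplitz.

Section Witness.
Context {C : numClosedFieldType} {d n : nat} {S : 'M[C]_d -> Prop}.

Definition step_toeplitz (A B : 'M[C]_d) (j : int) : 'M[C]_d :=
  if 0 < j then B else A.

Lemma F_set_step_toeplitz {A B : 'M[C]_d} :
  S A -> S B -> A *m B = B *m A ->
  F_set S A B (block_toeplitz n (step_toeplitz A B)).
Proof.
move=> hA hB cAB; exists (step_toeplitz A B); split=> //.
  by move=> j _; rewrite /step_toeplitz; case: ifP.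
move=> j /andP[hj1 hjn]; rewrite /step_toeplitz ifT ?ifF //; lia.
Qed.

Lemma F_set_step_toeplitz_rel {A B A' B' : 'M[C]_d} : (2 <= n)%N ->
  F_set S A' B' (block_toeplitz n (step_toeplitz A B)) -> A' *m B = B' *m A.
Proof.
move=> hn [T [eT _ hT]].
have eqT := block_toeplitz_inj_on eT.
have -> : B = T 1 by rewrite -eqT /step_toeplitz ?ifT //; lia.
have -> : A = T (1 - n%:Z).
  by rewrite -eqT /step_toeplitz ?ifF //; lia.
by apply: hT; lia.
Qed.

End Witness.

Theorem theorem4p6 (C : numClosedFieldType) (d n : nat) (hn : (2 <= n)%N)
  (S : 'M[C]_d -> Prop) (hS : is_maximal_comm_subalgebra S)
  (A B A' B' : 'M[C]_d) (hA : S A) (hB : S B) (hA' : S A') (hB' : S B')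
  (hAB : trivial_common_kernel A B) (hAB' : trivial_common_kernel A' B') :
  (forall M : 'M['M[C]_d]_n, @F_set C d n S A B M <-> @F_set C d n S A' B' M)
  <-> A *m B' = A' *m B.
Proof.
have hc : is_commutative_set S by case: hS => [[]].
split=> [eF | eAB M].
  have /eF := F_set_step_toeplitz (n:=n) hA hB (hc _ _ hA hB).
  move=> /(F_set_step_toeplitz_rel hn) eA'B.
  by rewrite (hc _ _ hA hB') -eA'B (hc _ _ hA' hB).
split; [exact: (F_set_sub hc hA hB hA' hB' hAB eAB) |
        exact: (F_set_sub hc hA' hB' hA hB hAB' (esym eAB))].
Qed.
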